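(* There is $m_0$ such that for every $m\ge m_0$ that is a power of $2$ and every function $f:\{0,1\}^N\to\{0,1\}$, $$C^{dt}_\oplus(f\circ\mathrm{IND}_m^N)\ge C^{dt}(f)\quad\text{and}\quad \mathrm{size}^{dt}_\oplus(f\circ\mathrm{IND}_m^N)\ge 2^{C^{dt}(f)}\ge\mathrm{size}^{dt}(f).$$
   Context: Let $m=2^\ell$. The function $f\circ\mathrm{IND}_m^N$ has Boolean input variables $x_{i,j'}$ ($i\in[N]$, $0\le j'<\ell$) and $y_{i,j}$ ($i\in[N]$, $0\le j<m$), and its value is $f(z)$ where $z_i=y_{i,x_i}$ and $x_i\in\{0,\dots,m-1\}$ is the number with binary representation $x_{i,\ell-1}\cdots x_{i,0}$. A parity decision tree is a rooted binary tree whose internal nodes are labeled by parities ($\mathbb{F}_2$-sums) of input variables, with out-edges labeled $0,1$, and whose leaves are labeled by outputs. $C^{dt}(f)$ and $\mathrm{size}^{dt}(f)$ are the minimum height and minimum number of leaves of an ordinary decision tree (querying single variables) computing $f$; $C^{dt}_\oplus$ and $\mathrm{size}^{dt}_\oplus$ are the corresponding measures for parity decision trees. *)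

From mathcomp Require Import all_boot.
From mathcomp Require Import boolp.
Set Implicit Arguments. Unset Strict Implicit. Unset Printing Implicit Defensive.

Section Trees.
Variable V : finType.

Inductive dtree := DLeaf of bool | DNode of V & dtree & dtree.

Inductive pdtree := PLeaf of bool | PNode of {set V} & pdtree & pdtree.

Fixpoint dt_eval (t : dtree) (x : {ffun V -> bool}) : bool :=
  match t with
  | DLeaf b => b
  | DNode v t0 t1 => if x v then dt_eval t1 x else dt_eval t0 x
  end.

Definition parity (S : {set V}) (x : {ffun V -> bool}) : bool :=
  odd (\sum_(v in S) x v).

Fixpoint pdt_eval (t : pdtree) (x : {ffun V -> bool}) : bool :=
  match t with
  | PLeaf b => b
  | PNode Q t0 t1 => if parity Q x then pdt_eval t1 x else pdt_eval t0 x
  end.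

Fixpoint dt_height (t : dtree) : nat :=
  match t with DLeaf _ => 0 | DNode _ t0 t1 => (maxn (dt_height t0) (dt_height t1)).+1 end.
Fixpoint pdt_height (t : pdtree) : nat :=
  match t with PLeaf _ => 0 | PNode _ t0 t1 => (maxn (pdt_height t0) (pdt_height t1)).+1 end.

Fixpoint dt_size (t : dtree) : nat :=
  match t with DLeaf _ => 1 | DNode _ t0 t1 => dt_size t0 + dt_size t1 end.
Fixpoint pdt_size (t : pdtree) : nat :=
  match t with PLeaf _ => 1 | PNode _ t0 t1 => pdt_size t0 + pdt_size t1 end.

Definition dt_computes (t : dtree) (f : {ffun V -> bool} -> bool) :=
  forall x, dt_eval t x = f x.
Definition pdt_computes (t : pdtree) (f : {ffun V -> bool} -> bool) :=
  forall x, pdt_eval t x = f x.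

Definition upd (a : {ffun V -> bool}) (v : V) (b : bool) : {ffun V -> bool} :=
  [ffun w => if w == v then b else a w].

Fixpoint build (f : {ffun V -> bool} -> bool) (s : seq V) (a : {ffun V -> bool}) : dtree :=
  match s with
  | [::] => DLeaf (f a)
  | v :: s' => DNode v (build f s' (upd a v false)) (build f s' (upd a v true))
  end.

Lemma build_eval f s a x :
  dt_eval (build f s a) x = f [ffun w => if w \in s then x w else a w].
Proof.
elim: s a => [|v s IH] a /=.
  by congr f; apply/ffunP => w; rewrite !ffunE.
have E : forall b, x v = b ->
  [ffun w => if w \in s then x w else upd a v b w] =
  [ffun w => if w \in v :: s then x w else a w].
  move=> b xb; apply/ffunP => w; rewrite !ffunE in_cons.
  case: eqP => [->|_] /=; first by rewrite xb; case: (v \in s).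
  by [].
by case xv: (x v); rewrite IH E.
Qed.

Lemma build_computes f : dt_computes (build f (enum V) [ffun=> false]) f.
Proof.
move=> x; rewrite build_eval; congr f; apply/ffunP => w.
by rewrite ffunE mem_enum.
Qed.

Fixpoint to_pdt (t : dtree) : pdtree :=
  match t with
  | DLeaf b => PLeaf b
  | DNode v t0 t1 => PNode [set v] (to_pdt t0) (to_pdt t1)
  end.

Lemma to_pdt_eval t x : pdt_eval (to_pdt t) x = dt_eval t x.
Proof.
elim: t => [b|v t0 IH0 t1 IH1] //=.
by rewrite /parity big_set1 oddb IH0 IH1.
Qed.

Lemma ex_dt_height f : exists n, `[< exists t, dt_computes t f /\ dt_height t = n >].
Proof. by exists (dt_height (build f (enum V) [ffun=> false])); apply/asboolP;
  eexists; split; [exact: build_computes|]. Qed.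
Lemma ex_dt_size f : exists n, `[< exists t, dt_computes t f /\ dt_size t = n >].
Proof. by exists (dt_size (build f (enum V) [ffun=> false])); apply/asboolP;
  eexists; split; [exact: build_computes|]. Qed.
Lemma ex_pdt_height f : exists n, `[< exists t, pdt_computes t f /\ pdt_height t = n >].
Proof.
exists (pdt_height (to_pdt (build f (enum V) [ffun=> false]))); apply/asboolP.
exists (to_pdt (build f (enum V) [ffun=> false])); split=> // x.
by rewrite to_pdt_eval; exact: build_computes.
Qed.
Lemma ex_pdt_size f : exists n, `[< exists t, pdt_computes t f /\ pdt_size t = n >].
Proof.
exists (pdt_size (to_pdt (build f (enum V) [ffun=> false]))); apply/asboolP.
exists (to_pdt (build f (enum V) [ffun=> false])); split=> // x.
by rewrite to_pdt_eval; exact: build_computes.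
Qed.

Definition C_dt f := ex_minn (ex_dt_height f).
Definition size_dt f := ex_minn (ex_dt_size f).
Definition C_pdt f := ex_minn (ex_pdt_height f).
Definition size_pdt f := ex_minn (ex_pdt_size f).

End Trees.

(* Variables of f o IND_m^N with m = 2^l:
   inl (i, j') is x_{i,j'} (0 <= j' < l), inr (i, j) is y_{i,j} (0 <= j < m). *)
Definition ind_var (N l : nat) : finType := (('I_N * 'I_l) + ('I_N * 'I_(2 ^ l)))%type.

Definition ind_addr N l (z : {ffun ind_var N l -> bool}) (i : 'I_N) : nat :=
  \sum_(j < l) z (inl (i, j)) * 2 ^ j.

(* z_i = y_{i, x_i} *)
Definition ind_out N l (z : {ffun ind_var N l -> bool}) (i : 'I_N) : bool :=
  [exists j : 'I_(2 ^ l), (nat_of_ord j == ind_addr z i) && z (inr (i, j))].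

Definition compose_IND N l (f : {ffun 'I_N -> bool} -> bool)
  (z : {ffun ind_var N l -> bool}) : bool :=
  f [ffun i => ind_out z i].

From mathcomp Require Import all_boot.
From mathcomp Require Import boolp.
Set Implicit Arguments. Unset Strict Implicit. Unset Printing Implicit Defensive.

(* An adversary answers the queries of a parity decision tree for f o IND while
   revealing at most one bit of the input of f per query.  At a query Q, pick a
   variable v of Q in block i, fix the other variables of block i so that the
   output z_i of the block is a constant b whatever v is, and let v absorb the
   parity of Q.  Both fixings are affine substitutions, so each subtree of the
   root becomes, with the same size, a parity tree for (f with z_i := b) o IND.
   Choosing b so that C^dt(f) <= 1 + C^dt(f with z_i := b), induction shows that
   the tree has at least 2^C^dt(f) leaves; the height bound follows because a
   tree of height h has at most 2^h leaves. *)


Section MinimalMeasure.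
Variables (T : Type) (P : T -> Prop) (m : T -> nat).
Hypothesis exP : exists n, `[< exists t, P t /\ m t = n >].

Lemma ex_minn_attained : exists2 t, P t & m t = ex_minn exP.
Proof. by case: ex_minnP => n /asboolP [t [Pt <-]] _; exists t. Qed.

Lemma ex_minn_le t : P t -> ex_minn exP <= m t.
Proof. by move=> Pt; case: ex_minnP => n _; apply; apply/asboolP; exists t. Qed.

End MinimalMeasure.

Lemma leq_add_exp2_maxn s0 s1 h0 h1 :
  s0 <= 2 ^ h0 -> s1 <= 2 ^ h1 -> s0 + s1 <= 2 ^ (maxn h0 h1).+1.
Proof.
move=> le_s0 le_s1; rewrite expnS mul2n -addnn.
apply: leq_add; [apply: leq_trans le_s0 _ | apply: leq_trans le_s1 _].
  by rewrite leq_pexp2l // leq_maxl.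
by rewrite leq_pexp2l // leq_maxr.
Qed.

Section DecisionTrees.
Variable V : finType.
Implicit Types (f : {ffun V -> bool} -> bool) (x : {ffun V -> bool}).

Lemma dt_size_le_exp_height (t : dtree V) : dt_size t <= 2 ^ dt_height t.
Proof. by elim: t => //= v t0 IH0 t1 IH1; apply: leq_add_exp2_maxn. Qed.

Lemma pdt_size_le_exp_height (t : pdtree V) : pdt_size t <= 2 ^ pdt_height t.
Proof. by elim: t => //= Q t0 IH0 t1 IH1; apply: leq_add_exp2_maxn. Qed.

Lemma C_dt_le f t : dt_computes t f -> C_dt f <= dt_height t.
Proof. exact: (ex_minn_le (ex_dt_height f)). Qed.

Lemma C_dt_attained f : exists2 t, dt_computes t f & dt_height t = C_dt f.
Proof. exact: ex_minn_attained. Qed.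

Lemma size_dt_le_exp_C_dt f : size_dt f <= 2 ^ C_dt f.
Proof.
have [t tf <-] := C_dt_attained f.
exact: leq_trans (ex_minn_le (ex_dt_size f) tf) (dt_size_le_exp_height t).
Qed.

Lemma C_dt_const f c : (forall x, f x = c) -> C_dt f = 0.
Proof. by move=> fc; apply/eqP; rewrite -leqn0 (@C_dt_le f (DLeaf V c)). Qed.

Definition restrict f (v : V) (b : bool) x := f (upd x v b).

Lemma upd_id x v : upd x v (x v) = x.
Proof. by apply/ffunP => w; rewrite ffunE; case: eqP => // ->. Qed.

Lemma C_dt_restrict f v : exists b, C_dt f <= (C_dt (restrict f v b)).+1.
Proof.
have [t0 t0f h0] := C_dt_attained (restrict f v false).
have [t1 t1f h1] := C_dt_attained (restrict f v true).
have : C_dt f <= dt_height (DNode v t0 t1).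
  apply: C_dt_le => x /=; rewrite t0f t1f /restrict.
  by case xv: (x v); rewrite -xv upd_id.
rewrite /= h0 h1; case/orP: (leq_total (C_dt (restrict f v false))
                                       (C_dt (restrict f v true))).
  by move/maxn_idPr => -> ?; exists true.
by move/maxn_idPl => -> ?; exists false.
Qed.

End DecisionTrees.

Section Affine.
Variable V : finType.
Implicit Types (z : {ffun V -> bool}) (F G : {ffun V -> bool} -> bool)
  (sg : {ffun V -> bool} -> {ffun V -> bool}).

Lemma parity_addb (S : {set V}) z : parity S z = \big[addb/false]_(v in S) z v.
Proof. by rewrite /parity; elim/big_rec2: _ => //= v n b _ <-; rewrite oddD oddb. Qed.

Lemma parity_all (S : {set V}) z : parity S z = \big[addb/false]_v ((v \in S) && z v).
Proof. by rewrite parity_addb big_mkcond; apply: eq_bigr => v _; case: (v \in S). Qed.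

Lemma parityD1 (S : {set V}) v z : v \in S -> parity S z = z v (+) parity (S :\ v) z.
Proof.
move=> vS; rewrite !parity_addb (bigD1 v) //=; congr addb.
by apply: eq_bigl => w; rewrite in_setD1 andbC.
Qed.

Definition affine F := exists c S, forall z, F z = c (+) parity S z.

Definition affine_map sg := forall w, affine (fun z => sg z w).

Lemma affine_ext F G : F =1 G -> affine F -> affine G.
Proof. by move=> FG [c [S FE]]; exists c, S => z; rewrite -FG. Qed.

Lemma affine_const c : affine (fun _ => c).
Proof. by exists c, set0 => z; rewrite parity_addb big_set0 addbF. Qed.

Lemma affine_var w : affine (fun z => z w).
Proof. by exists false, [set w] => z; rewrite parity_addb big_set1. Qed.

Lemma affine_addb F G : affine F -> affine G -> affine (fun z => F z (+) G z).
Proof.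
move=> [c1 [S1 FE]] [c2 [S2 GE]].
exists (c1 (+) c2), [set v | (v \in S1) (+) (v \in S2)] => z.
rewrite FE GE !parity_all addbACA -big_split /=; congr addb.
by apply: eq_bigr => v _; rewrite inE; case: (v \in S1); case: (v \in S2); case: (z v).
Qed.

Lemma affine_big_addb (s : seq V) (P : pred V) (G : V -> {ffun V -> bool} -> bool) :
  (forall w, affine (G w)) -> affine (fun z => \big[addb/false]_(w <- s | P w) G w z).
Proof.
move=> affG; elim: s => [|w s IH].
  by apply: affine_ext (affine_const false) => z; rewrite big_nil.
case: (boolP (P w)) => Pw.
  by apply: affine_ext (affine_addb (affG w) IH) => z; rewrite big_cons Pw.
by apply: affine_ext IH => z; rewrite big_cons (negbTE Pw).
Qed.

Lemma affine_parity_comp sg (S : {set V}) :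
  affine_map sg -> affine (fun z => parity S (sg z)).
Proof.
move=> affsg; apply: affine_ext (affine_big_addb (index_enum V) (mem S) affsg) => z.
by rewrite parity_addb.
Qed.

Lemma pdt_comp_affine sg (t : pdtree V) : affine_map sg ->
  exists t', [/\ pdt_size t' = pdt_size t, pdt_height t' = pdt_height t
               & forall z, pdt_eval t' z = pdt_eval t (sg z)].
Proof.
move=> affsg; elim: t => [b|Q t0 [t0' [s0 h0 e0]] t1 [t1' [s1 h1 e1]]].
  by exists (PLeaf V b).
have [[] [S QE]] := affine_parity_comp Q affsg.
  exists (PNode S t1' t0'); split=> /=; rewrite 1?addnC 1?maxnC; try congruence.
  by move=> z; rewrite QE e0 e1; case: (parity S z).
exists (PNode S t0' t1'); split=> /=; try congruence.
by move=> z; rewrite QE e0 e1.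
Qed.

Definition set_parity (Q : {set V}) v a z := upd z v (a (+) parity (Q :\ v) z).

Lemma parity_set_parity (Q : {set V}) v a z :
  v \in Q -> parity Q (set_parity Q v a z) = a.
Proof.
move=> vQ; rewrite (parityD1 _ vQ) ffunE eqxx.
have -> : parity (Q :\ v) (set_parity Q v a z) = parity (Q :\ v) z.
  rewrite !parity_addb; apply: eq_bigr => w.
  by rewrite in_setD1 ffunE => /andP[/negbTE ->].
by rewrite -addbA addbb addbF.
Qed.

Lemma affine_map_set_parity (Q : {set V}) v a sg :
  affine_map sg -> affine_map (set_parity Q v a \o sg).
Proof.
move=> affsg w; case: (eqVneq w v) => [->|wv].
  apply: affine_ext (affine_addb (affine_const a) (affine_parity_comp (Q :\ v) affsg)).
  by move=> z; rewrite /= ffunE eqxx.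
by apply: affine_ext (affsg w) => z; rewrite /= ffunE (negbTE wv).
Qed.

End Affine.

Lemma sum_bits_lt n (F : 'I_n -> bool) : \sum_(j < n) F j * 2 ^ j < 2 ^ n.
Proof.
elim: n F => [|n IH] F; first by rewrite big_ord0.
rewrite big_ord_recr /= expnS mul2n -addnn -addSn; apply: leq_add; first exact: IH.
by case: (F ord_max); rewrite ?mul1n ?mul0n.
Qed.

Section Indexing.
Variables N l : nat.
Local Notation var := (ind_var N l).
Implicit Types (z : {ffun var -> bool}) (x : {ffun 'I_N -> bool}) (v w : var)
  (f : {ffun 'I_N -> bool} -> bool) (Q : {set var}) (T : pdtree var).

Definition block (w : var) : 'I_N := match w with inl p => p.1 | inr p => p.1 end.

Definition ind_outs z := [ffun i => ind_out z i].

Lemma ind_addr_lt z i : ind_addr z i < 2 ^ l.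
Proof. exact: sum_bits_lt. Qed.

Lemma ind_out_uniform z i b :
  (forall k : 'I_(2 ^ l), k = ind_addr z i :> nat -> z (inr (i, k)) = b) ->
  ind_out z i = b.
Proof.
move=> zb; apply/existsP; case: b zb => zb.
  by exists (Ordinal (ind_addr_lt z i)); rewrite eqxx zb.
by case=> k /andP[/eqP/zb ->].
Qed.

Lemma ind_out_local z z' i :
  (forall w, block w = i -> z w = z' w) -> ind_out z i = ind_out z' i.
Proof.
move=> zz'; rewrite /ind_out /ind_addr.
rewrite (eq_bigr (fun j => z' (inl (i, j)) * 2 ^ j)) => [|j _]; last by rewrite zz'.
by apply: eq_existsb => k; rewrite zz'.
Qed.

Definition ind_embed x : {ffun var -> bool} :=
  [ffun w => if w is inr p then x p.1 else false].

Lemma ind_outs_embed x : ind_outs (ind_embed x) = x.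
Proof. by apply/ffunP => i; rewrite ffunE; apply: ind_out_uniform => k _; rewrite ffunE. Qed.

(* Fixing the other variables of the block of v to these values makes the
   output of that block b whatever v is: if v is an address bit, all data bits
   are b; if v = y_{i,j}, the address is 1 when j = 0 and 0 otherwise, so it
   never selects v. *)
Definition stifle_val (v w : var) (b : bool) : bool :=
  match w, v with
  | inr _, _ => b
  | inl p, inr q => (q.2 == 0 :> nat) && (p.2 == 0 :> nat)
  | inl _, inl _ => false
  end.

Definition stifle v b z : {ffun var -> bool} :=
  [ffun w => if (block w == block v) && (w != v) then stifle_val v w b else z w].

Lemma affine_map_stifle v b : affine_map (stifle v b).
Proof.
move=> w; case stw: ((block w == block v) && (w != v)).
  by apply: affine_ext (affine_const _ (stifle_val v w b)) => z; rewrite ffunE stw.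
by apply: affine_ext (affine_var w) => z; rewrite ffunE stw.
Qed.

Hypothesis l_gt0 : 0 < l.

Lemma ind_out_stifled v b z :
  (forall w, block w = block v -> w != v -> z w = stifle_val v w b) ->
  ind_out z (block v) = b.
Proof.
move=> zv; apply: ind_out_uniform => k addr_k.
case: v zv addr_k => [[i j]|[i j]] /= zv addr_k; first exact: zv.
have addr_j : ind_addr z i = (j == 0 :> nat).
  rewrite /ind_addr; under eq_bigr => j' _ do rewrite zv //=.
  case: eqP => [_|_]; last by rewrite big1.
  rewrite (bigD1 (Ordinal l_gt0)) //= big1 ?addn0 // => j' /eqP j'0.
  by case: eqP => // j'_0; case: j'0; apply: val_inj.
have kj : k != j :> nat by rewrite addr_k addr_j; case: (val j) => [|[]].
by apply: zv => //; apply: contraNneq kj => -[->].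
Qed.

Lemma ind_outs_stifle v b c z :
  ind_outs (upd (stifle v b z) v c) = upd (ind_outs z) (block v) b.
Proof.
apply/ffunP => i; rewrite !ffunE; case: eqP => [->|iv].
  by apply: ind_out_stifled => w bw wv; rewrite !ffunE (negbTE wv) bw eqxx.
apply: ind_out_local => w bw; rewrite !ffunE bw.
by case: eqP => [wv|_]; [case: iv; rewrite -bw wv | case: eqP].
Qed.

Lemma pdt_child_restrict f Q (t0 t1 : pdtree var) v b a : v \in Q ->
  pdt_computes (PNode Q t0 t1) (@compose_IND N l f) ->
  exists t', [/\ pdt_size t' = pdt_size (if a then t1 else t0),
                 pdt_height t' = pdt_height (if a then t1 else t0)
               & pdt_computes t' (@compose_IND N l (restrict f (block v) b))].
Proof.
move=> vQ Tf.
have [t' [size_t' height_t' t'E]] :=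
  pdt_comp_affine (if a then t1 else t0) (affine_map_set_parity Q v a (affine_map_stifle v b)).
exists t'; split=> // z; rewrite t'E.
have := Tf (set_parity Q v a (stifle v b z)).
rewrite /= parity_set_parity // -(fun_if (fun t : pdtree var => pdt_eval t _)) => ->.
by rewrite /compose_IND /restrict; congr f; apply: ind_outs_stifle.
Qed.

Lemma exp_C_dt_le_pdt_size f T :
  pdt_computes T (@compose_IND N l f) -> 2 ^ C_dt f <= pdt_size T.
Proof.
move: {2}(pdt_height T) (leqnn (pdt_height T)) => n.
elim: n T f => [|n IH] [c|Q t0 t1] f //= hT Tf;
  try by rewrite (@C_dt_const _ f c) // => x; rewrite -[x]ind_outs_embed; exact/esym/Tf.
have [h0 h1] : pdt_height t0 <= n /\ pdt_height t1 <= n.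
  by apply/andP; rewrite -geq_max.
case: (pickP (mem Q)) => [v vQ | Q0]; last first.
  apply: leq_trans (leq_addr _ _); apply: IH h0 _ => z.
  by rewrite -Tf /= parity_addb big_pred0.
have [b le_Cf] := C_dt_restrict f (block v).
have child a : 2 ^ C_dt (restrict f (block v) b) <= pdt_size (if a then t1 else t0).
  have [t' [<- ht' t'f]] := pdt_child_restrict b a vQ Tf.
  by apply: IH t'f; rewrite ht'; case: (a).
apply: leq_trans (leq_add (child false) (child true)).
by rewrite addnn -mul2n -expnS leq_exp2l.
Qed.

End Indexing.

Theorem theorem18 : exists m0 : nat, forall l : nat, m0 <= 2 ^ l ->
  forall (N : nat) (f : {ffun 'I_N -> bool} -> bool),
    C_dt f <= C_pdt (@compose_IND N l f) /\
    2 ^ C_dt f <= size_pdt (@compose_IND N l f) /\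
    size_dt f <= 2 ^ C_dt f.
Proof.
exists 2 => l l_ge2 N f; have l_gt0 : 0 < l by case: l l_ge2.
rewrite /C_pdt /size_pdt.
have [T Tf <-] := ex_minn_attained (ex_pdt_height (@compose_IND N l f)).
have [S Sf <-] := ex_minn_attained (ex_pdt_size (@compose_IND N l f)).
split; [|split; [exact: exp_C_dt_le_pdt_size Sf|exact: size_dt_le_exp_C_dt]].
rewrite -(@leq_exp2l 2) //; apply: leq_trans (pdt_size_le_exp_height T).
exact: exp_C_dt_le_pdt_size Tf.
Qed.
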